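(* For $n\ge1$, $$\left|\Pi_n \wr C_2 (1^11^1, 1^11^2, 1^21^1)\right|=\left|\Pi_n \wr C_2 (1^11^2, 1^21^1, 1^12^1)\right|=\left|\Pi_n \wr C_2 (1^12^1, 1^12^2, 1^22^1)\right|=2^n.$$
   Context: For $n\ge0$ let $[n]=\{1,\dots,n\}$. A $2$-colored set partition of $[n]$ is a set partition of $[n]$ together with an assignment of a color from $\{1,2\}$ to each element; $\Pi_n\wr C_2$ is the set of these. For a set $S$ of patterns, $\Pi_n\wr C_2(S)$ is the set of such colored partitions avoiding every pattern in $S$ in the pattern sense. For the patterns used here: $\sigma$ contains $1^11^1$ iff two elements in the same block have the same color; $1^11^2$ iff there are $i<j$ in the same block with $i$ colored $1$ and $j$ colored $2$; $1^21^1$ iff there are $i<j$ in the same block with $i$ colored $2$ and $j$ colored $1$; $1^12^1$ iff two elements in different blocks have the same color; $1^12^2$ iff there are $i<j$ in different blocks with $i$ colored $1$ and $j$ colored $2$; $1^22^1$ iff there are $i<j$ in different blocks with $i$ colored $2$ and $j$ colored $1$. *)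

From mathcomp Require Import all_boot.
Set Implicit Arguments. Unset Strict Implicit. Unset Printing Implicit Defensive.

(* Elements of [n] = {1..n} are represented by 'I_n (i.e. 0..n-1, order preserved).
   Colors {1,2} are represented by 'I_2: color 1 = value 0, color 2 = value 1. *)
Definition col1 : 'I_2 := @Ordinal 2 0 isT.
Definition col2 : 'I_2 := @Ordinal 2 1 isT.

(* A 2-colored set partition of [n]: a set partition P of [n] (mathcomp's
   [partition P [set: 'I_n]]: blocks nonempty, pairwise disjoint, covering)
   together with a coloring c. *)
Definition colored_partition (n : nat) := ({set {set 'I_n}} * {ffun 'I_n -> 'I_2})%type.

Definition is_cpart n (x : colored_partition n) : bool :=
  partition x.1 [set: 'I_n].

Definition same_block n (P : {set {set 'I_n}}) (i j : 'I_n) : bool :=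
  [exists B in P, (i \in B) && (j \in B)].

(* contains 1^1 1^1: two (distinct) elements in the same block with the same color *)
Definition contains_11_11 n (x : colored_partition n) : bool :=
  [exists i : 'I_n, exists j : 'I_n,
     [&& i != j, same_block x.1 i j & x.2 i == x.2 j]].
Definition contains_11_12 n (x : colored_partition n) : bool :=
  [exists i : 'I_n, exists j : 'I_n,
     [&& i < j, same_block x.1 i j, x.2 i == col1 & x.2 j == col2]].
Definition contains_12_11 n (x : colored_partition n) : bool :=
  [exists i : 'I_n, exists j : 'I_n,
     [&& i < j, same_block x.1 i j, x.2 i == col2 & x.2 j == col1]].
(* contains 1^1 2^1: two elements in different blocks with the same color *)
Definition contains_11_21 n (x : colored_partition n) : bool :=
  [exists i : 'I_n, exists j : 'I_n,
     [&& i != j, ~~ same_block x.1 i j & x.2 i == x.2 j]].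
Definition contains_11_22 n (x : colored_partition n) : bool :=
  [exists i : 'I_n, exists j : 'I_n,
     [&& i < j, ~~ same_block x.1 i j, x.2 i == col1 & x.2 j == col2]].
Definition contains_12_21 n (x : colored_partition n) : bool :=
  [exists i : 'I_n, exists j : 'I_n,
     [&& i < j, ~~ same_block x.1 i j, x.2 i == col2 & x.2 j == col1]].

Definition avoiders n (S : seq (colored_partition n -> bool)) : {set colored_partition n} :=
  [set x | is_cpart x & all (fun p => ~~ p x) S].

From mathcomp Require Import all_boot.
Set Implicit Arguments. Unset Strict Implicit. Unset Printing Implicit Defensive.

(* Avoiding 1^11^2 and 1^21^1 makes every block monochromatic, avoiding 1^12^2
   and 1^22^1 makes elements of different blocks share their color, while
   1^11^1 (resp. 1^12^1) forbids a repeated color inside a block (resp. across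
   blocks).  In the three cases the partition is therefore forced to be the
   discrete one, the partition into color classes, or the one-block partition,
   and conversely each of these avoids the patterns.  So the avoiders are in
   bijection with the 2^n colorings. *)

Definition avoids n (S : seq (colored_partition n -> bool)) (x : colored_partition n) : bool :=
  all (fun p => ~~ p x) S.

Lemma neq_colP (a b : 'I_2) : a != b ->
  (a == col1) && (b == col2) \/ (a == col2) && (b == col1).
Proof. by case: a => [[|[|//]]] ?; case: b => [[|[|//]]] ?; auto. Qed.

Section SameBlock.
Variables (n : nat) (P : {set {set 'I_n}}).

Lemma same_blockC : symmetric (same_block P).
Proof.
by move=> i j; apply/existsP/existsP => -[B /and3P[PB iB jB]]; exists B; rewrite PB iB jB.
Qed.

Hypothesis partP : partition P [set: 'I_n].

Lemma same_blockE i j : same_block P i j = (j \in pblock P i).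
Proof.
have [/eqP coverP trivP _] := and3P partP.
apply/existsP/idP => [[B /and3P[PB iB jB]]|jPi]; first by rewrite (def_pblock trivP PB iB).
by exists (pblock P i); rewrite jPi pblock_mem ?mem_pblock coverP ?inE.
Qed.

Lemma same_block_refl : reflexive (same_block P).
Proof.
by move=> i; rewrite same_blockE mem_pblock; case/and3P: partP => /eqP -> _ _; rewrite inE.
Qed.

End SameBlock.

Section PairPatterns.
Variables (n : nat) (Q : rel 'I_n) (c : {ffun 'I_n -> 'I_2}).

Lemma monochrome_pairsPn :
  reflect (forall i j, i != j -> Q i j -> c i != c j)
          (~~ [exists i : 'I_n, exists j : 'I_n, [&& i != j, Q i j & c i == c j]]).
Proof.
apply: (iffP existsPn) => [noP i j ij Qij|mono i].
  by move/existsPn: (noP i) => /(_ j); rewrite ij Qij.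
apply/existsPn => j; apply/negP => /and3P[ij Qij /eqP cij].
by move: (mono i j ij Qij); rewrite cij eqxx.
Qed.

Hypothesis Q_sym : symmetric Q.

Lemma bicolored_pairsPn :
  reflect (forall i j, Q i j -> c i = c j)
          (~~ [exists i : 'I_n, exists j : 'I_n, [&& i < j, Q i j, c i == col1 & c j == col2]] &&
           ~~ [exists i : 'I_n, exists j : 'I_n, [&& i < j, Q i j, c i == col2 & c j == col1]]).
Proof.
apply: (iffP andP) => [[/existsPn no12 /existsPn no21] | mono]; last first.
  by split; apply/existsPn => i; apply/existsPn => j;
    apply/negP => /and4P[_ Qij /eqP ci /eqP cj]; move: (mono i j Qij); rewrite ci cj.
have mono_lt (i j : 'I_n) : i < j -> Q i j -> c i = c j.
  move=> lt_ij Qij; apply/eqP; apply: contraT => /neq_colP[]/andP[ci cj].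
    by move/existsPn: (no12 i) => /(_ j); rewrite lt_ij Qij ci cj.
  by move/existsPn: (no21 i) => /(_ j); rewrite lt_ij Qij ci cj.
move=> i j Qij; case: (ltngtP i j) => [lt_ij|gt_ij|/val_inj-> //].
  exact: mono_lt.
by rewrite (mono_lt j i) // Q_sym.
Qed.

End PairPatterns.

Section Avoiders.
Variable n : nat.
Implicit Types (P : {set {set 'I_n}}) (c : {ffun 'I_n -> 'I_2}).

Lemma card_avoiders_block_rel (S : seq (colored_partition n -> bool))
    (R : {ffun 'I_n -> 'I_2} -> rel 'I_n) :
  (forall c, equivalence_rel (R c)) ->
  (forall P c, partition P [set: 'I_n] -> avoids S (P, c) <-> same_block P =2 R c) ->
  #|avoiders S| = 2 ^ n.
Proof.
move=> Req avoidsE.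
have Req_in c : {in [set: 'I_n] & &, equivalence_rel (R c)} by move=> x y z _ _ _; apply: Req.
have -> : avoiders S = [set (equivalence_partition (R c) setT, c) | c : {ffun 'I_n -> 'I_2}].
  apply/setP => -[P c]; rewrite inE /is_cpart /=.
  apply/andP/imsetP => [[partP /avoidsE sbE] | [c' _ [-> ->]]].
    exists c => //; congr pair.
    rewrite -(equivalence_partition_pblock partP); apply: eq_imset => x.
    by apply/setP => y; rewrite !inE -same_blockE // sbE.
  have partP := equivalence_partitionP (Req_in c').
  split => //; apply/avoidsE => // i j.
  by rewrite same_blockE // pblock_equivalence_partition ?inE.
rewrite card_imset => [|c1 c2 /(congr1 snd) //].
by rewrite card_ffun !card_ord.
Qed.

Lemma avoids_iff_discrete P c : partition P [set: 'I_n] ->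
  avoids [:: @contains_11_11 n; @contains_11_12 n; @contains_12_11 n] (P, c) <->
  same_block P =2 (fun i j => i == j).
Proof.
move=> partP; rewrite /avoids /= andbT.
split=> [/andP[/(monochrome_pairsPn (same_block P)) mono
               /(bicolored_pairsPn c (same_blockC P)) mono'] i j | sbE].
  case: (eqVneq i j) => [->|ij]; first exact: same_block_refl.
  by apply/negbTE/negP => sb; move: (mono i j ij sb); rewrite (mono' i j sb) eqxx.
apply/andP; split.
  by apply/(monochrome_pairsPn (same_block P)) => i j; rewrite sbE => /negbTE->.
by apply/(bicolored_pairsPn c (same_blockC P)) => i j; rewrite sbE => /eqP->.
Qed.

Lemma avoids_iff_color_classes P c : partition P [set: 'I_n] ->
  avoids [:: @contains_11_12 n; @contains_12_11 n; @contains_11_21 n] (P, c) <->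
  same_block P =2 (fun i j => c i == c j).
Proof.
move=> partP; rewrite /avoids /= andbT andbA.
split=> [/andP[/(bicolored_pairsPn c (same_blockC P)) mono'
               /(monochrome_pairsPn (fun i j => ~~ same_block P i j)) mono] i j | sbE].
  apply/idP/eqP => [/mono'//|cij].
  case: (eqVneq i j) => [->|ij]; first exact: same_block_refl.
  by apply: contraT => /(mono i j ij); rewrite cij eqxx.
apply/andP; split.
  by apply/(bicolored_pairsPn c (same_blockC P)) => i j; rewrite sbE => /eqP.
by apply/(monochrome_pairsPn (fun i j => ~~ same_block P i j)) => i j _; rewrite sbE.
Qed.

Lemma avoids_iff_one_block P c : partition P [set: 'I_n] ->
  avoids [:: @contains_11_21 n; @contains_11_22 n; @contains_12_21 n] (P, c) <->
  same_block P =2 (fun _ _ => true).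
Proof.
move=> partP; rewrite /avoids /= andbT.
have nsb_sym : symmetric (fun i j => ~~ same_block P i j) by move=> i j; rewrite same_blockC.
split=> [/andP[/(monochrome_pairsPn (fun i j => ~~ same_block P i j)) mono
               /(bicolored_pairsPn c nsb_sym) mono'] i j | sbE].
  apply: contraT => nsb; case: (eqVneq i j) => [eq_ij|ij].
    by rewrite eq_ij same_block_refl in nsb.
  by move: (mono i j ij nsb); rewrite (mono' i j nsb) eqxx.
apply/andP; split.
  by apply/(monochrome_pairsPn (fun i j => ~~ same_block P i j)) => i j _; rewrite sbE.
by apply/(bicolored_pairsPn c nsb_sym) => i j; rewrite sbE.
Qed.

End Avoiders.

Theorem mainTheorem13 (n : nat) : 1 <= n ->
  [/\ #|avoiders [:: @contains_11_11 n; @contains_11_12 n; @contains_12_11 n]| = 2 ^ n,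
      #|avoiders [:: @contains_11_12 n; @contains_12_11 n; @contains_11_21 n]| = 2 ^ n &
      #|avoiders [:: @contains_11_21 n; @contains_11_22 n; @contains_12_21 n]| = 2 ^ n].
Proof.
move=> _; split.
- apply: (card_avoiders_block_rel (R := fun _ => eq_op)) => [c|P c].
    by split=> // /eqP->.
  exact: avoids_iff_discrete.
- apply: (card_avoiders_block_rel (R := fun c i j => c i == c j)) => [c|P c].
    by split=> // /eqP->.
  exact: avoids_iff_color_classes.
- apply: (card_avoiders_block_rel (R := fun _ _ _ => true)) => // P c.
  exact: avoids_iff_one_block.
Qed.
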